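(* For every positive integer $d$, every graph $G$ that is isomorphic to the intersection graph of a finite collection of closed balls in $\mathbb{R}^d$ has minimum degree at most $(2\tau(G)+1)\cdot 3^d$. In particular, the class of intersection graphs of balls in $\mathbb{R}^d$ is degree-bounded with degree-bounding function $f_d(\tau)=(2\tau+1)3^d$.
   Context: The intersection graph of a finite collection $\mathcal{B}$ of sets has vertex set $\mathcal{B}$, two distinct members being adjacent if they intersect. A closed ball in $\mathbb{R}^d$ is a set $\{x:\|x-p\|_2\le r\}$ with $r>0$. The biclique number $\tau(G)$ is the largest $t$ such that $G$ has a (not necessarily induced) subgraph isomorphic to $K_{t,t}$. A class $\mathcal{F}$ is degree-bounded with degree-bounding function $f$ if $\delta(G)\le f(\tau(G))$ for all $G\in\mathcal{F}$, where $\delta$ is minimum degree. *)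

From HB Require Import structures.
From mathcomp Require Import all_boot all_order all_algebra.
From mathcomp Require Import reals.
Set Implicit Arguments. Unset Strict Implicit. Unset Printing Implicit Defensive.
Import Order.TTheory GRing.Theory Num.Theory.

Local Open Scope ring_scope.

Definition euclid_norm (R : realType) (d : nat) (x : 'I_d -> R) : R :=
  Num.sqrt (\sum_(i < d) x i ^+ 2).

Definition closed_ball (R : realType) (d : nat) (p : 'I_d -> R) (r : R)
  (x : 'I_d -> R) : Prop :=
  euclid_norm (fun i => x i - p i) <= r.

Local Close Scope ring_scope.

Definition simple_graph (V : finType) (e : rel V) : Prop :=
  symmetric e /\ irreflexive e.

Definition has_biclique (V : finType) (e : rel V) (t : nat) : bool :=
  [exists A : {set V}, exists B : {set V},
     [&& [disjoint A & B], #|A| == t, #|B| == t &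
         [forall a in A, forall b in B, e a b]]].

Definition biclique_number (V : finType) (e : rel V) : nat :=
  \max_(t < #|V|.+1 | has_biclique e t) t.

Definition degree (V : finType) (e : rel V) (v : V) : nat :=
  #|[set w | e v w]|.

From HB Require Import structures.
From mathcomp Require Import all_boot all_order all_algebra.
From mathcomp Require Import reals.
From mathcomp Require Import ring lra zify.
Set Implicit Arguments. Unset Strict Implicit. Unset Printing Implicit Defensive.
Import Order.TTheory GRing.Theory Num.Theory.

(* Let B(p, r) be a ball of minimum radius.  Every ball meeting it contains
   a ball of radius r whose center lies within 2 r of p.  After rescaling
   B(p, r) to the unit ball, the centers of these small balls, one per
   neighbour, lie in the ball of radius 2, and no unit ball B(x, 1) contains
   more than 2 tau + 1 of them: the corresponding balls all contain p + r x,
   hence form a clique, and a clique on 2 tau + 2 vertices contains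
   K_{tau+1,tau+1}.  A volume comparison between the unit balls around these
   centers and the ball of radius 3 then bounds the degree of the center of
   B(p, r) by (2 tau + 1) 3^d. *)

Local Open Scope ring_scope.

Section EuclideanNorm.
Variables (R : realType) (d : nat).
Implicit Types (x y z : 'I_d -> R).

Definition sqnorm x : R := \sum_(i < d) x i ^+ 2.

Lemma sqnorm_ge0 x : 0 <= sqnorm x.
Proof. by apply: sumr_ge0 => i _; rewrite sqr_ge0. Qed.

Lemma sqr_le_sqnorm x i : x i ^+ 2 <= sqnorm x.
Proof. by rewrite /sqnorm (bigD1 i) //= lerDl sumr_ge0 // => j _; rewrite sqr_ge0. Qed.

Lemma sqnorm_eq0 x : sqnorm x = 0 -> forall i, x i = 0.
Proof.
move=> x0 i; apply/eqP; rewrite -sqrf_eq0 eq_le sqr_ge0 andbT -x0.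
exact: sqr_le_sqnorm.
Qed.

Lemma eq_sqnorm x y : (forall i, x i = y i) -> sqnorm x = sqnorm y.
Proof. by move=> xy; apply: eq_bigr => i _; rewrite xy. Qed.

Lemma eq_euclid_norm x y : (forall i, x i = y i) -> euclid_norm x = euclid_norm y.
Proof. by move=> /eq_sqnorm xy; rewrite /euclid_norm -/(sqnorm x) xy. Qed.

Lemma sqnormZ (t : R) x : sqnorm (fun i => t * x i) = t ^+ 2 * sqnorm x.
Proof. by rewrite /sqnorm mulr_sumr; apply: eq_bigr => i _; rewrite exprMn. Qed.

Lemma sqnorm_le_const x (A : R) : (forall i, x i ^+ 2 <= A) -> sqnorm x <= d%:R * A.
Proof. by move=> xA; rewrite -[d in d%:R]card_ord mulr_natl -sumr_const ler_sum. Qed.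

Lemma euclid_norm_ge0 x : 0 <= euclid_norm x.
Proof. exact: sqrtr_ge0. Qed.

Lemma euclid_norm_sqr x : euclid_norm x ^+ 2 = sqnorm x.
Proof. by rewrite sqr_sqrtr // sqnorm_ge0. Qed.

Lemma euclid_norm_le x r : 0 <= r -> (euclid_norm x <= r) = (sqnorm x <= r ^+ 2).
Proof. by move=> r0; rewrite -euclid_norm_sqr ler_pXn2r // nnegrE euclid_norm_ge0. Qed.

Lemma euclid_normZ (t : R) x : euclid_norm (fun i => t * x i) = `|t| * euclid_norm x.
Proof. by rewrite /euclid_norm -/(sqnorm _) sqnormZ sqrtrM ?sqr_ge0 // sqrtr_sqr. Qed.

Lemma cauchy_schwarz x y : \sum_(i < d) x i * y i <= euclid_norm x * euclid_norm y.
Proof.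
set s := euclid_norm x; set t := euclid_norm y; set C := \sum_(i < d) x i * y i.
have s0 : 0 <= s := euclid_norm_ge0 x.
have t0 : 0 <= t := euclid_norm_ge0 y.
have sum_sqr : \sum_(i < d) (x i * t - y i * s) ^+ 2 = 2 * (s * t) * (s * t - C).
  transitivity (t ^+ 2 * sqnorm x + s ^+ 2 * sqnorm y - 2 * s * t * C).
    rewrite /sqnorm /C !mulr_sumr -big_split -sumrB /=.
    by apply: eq_bigr => i _; ring.
  by rewrite -!euclid_norm_sqr -/s -/t; ring.
have [st0|st_neq0] := eqVneq (s * t) 0.
  have zero_sum z : euclid_norm z = 0 -> forall i, z i = 0.
    by move=> z0; apply: sqnorm_eq0; rewrite -euclid_norm_sqr z0 expr0n.
  rewrite st0 /C big1 // => i _.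
  by move: st0 => /eqP; rewrite mulf_eq0 => /orP[]/eqP/zero_sum ->; rewrite ?mul0r ?mulr0.
have st_gt0 : 0 < s * t by rewrite lt_def st_neq0 mulr_ge0.
have : 0 <= 2 * (s * t) * (s * t - C).
  by rewrite -sum_sqr sumr_ge0 // => i _; rewrite sqr_ge0.
by rewrite (pmulr_rge0 _ (_ : 0 < 2 * (s * t))); lra.
Qed.

Lemma ler_euclid_normD x y :
  euclid_norm (fun i => x i + y i) <= euclid_norm x + euclid_norm y.
Proof.
rewrite euclid_norm_le ?addr_ge0 ?euclid_norm_ge0 //.
have -> : sqnorm (fun i => x i + y i) = sqnorm x + sqnorm y + 2 * \sum_(i < d) x i * y i.
  by rewrite /sqnorm mulr_sumr -!big_split /=; apply: eq_bigr => i _; ring.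
have := cauchy_schwarz x y; rewrite -!euclid_norm_sqr; nra.
Qed.

Lemma euclid_dist_triangle x y z :
  euclid_norm (fun i => x i - z i) <=
  euclid_norm (fun i => x i - y i) + euclid_norm (fun i => y i - z i).
Proof.
rewrite (@eq_euclid_norm _ (fun i => (x i - y i) + (y i - z i))) => [|i]; last by ring.
exact: ler_euclid_normD.
Qed.

Lemma euclid_distC x y : euclid_norm (fun i => x i - y i) = euclid_norm (fun i => y i - x i).
Proof.
rewrite -[RHS]mul1r -(normrN1 R) -euclid_normZ; apply: eq_euclid_norm => i; ring.
Qed.

End EuclideanNorm.

Section ShrinkBall.
Variables (R : realType) (d : nat).
Implicit Types (p c : 'I_d -> R) (r : R).

(* The point on the segment [c, p] at distance 2 r from p, or c itself when
   c is already that close to p. *)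
Definition shrink_coef p c r : R :=
  let D := euclid_norm (fun i => c i - p i) in
  if D <= 2 * r then 0 else (D - 2 * r) / D.

Definition shrink_center p c r : 'I_d -> R :=
  fun i => c i + shrink_coef p c r * (p i - c i).

Lemma shrink_center_near p c r : 0 < r ->
  euclid_norm (fun i => shrink_center p c r i - p i) <= 2 * r.
Proof.
move=> r_gt0; set D := euclid_norm (fun i => c i - p i).
rewrite (@eq_euclid_norm _ _ _ (fun i => (1 - shrink_coef p c r) * (c i - p i))) => [|i];
  last by rewrite /shrink_center; ring.
rewrite euclid_normZ -/D /shrink_coef -/D.
case: ifP => [close|/negbT]; first by rewrite subr0 normr1 mul1r.
rewrite -ltNge => far; have D_gt0 : 0 < D by lra.
have -> : 1 - (D - 2 * r) / D = 2 * r / D by field; lra.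
by rewrite ger0_norm ?divfK ?divr_ge0 ?gt_eqF //; lra.
Qed.

Lemma shrink_ball_sub p c r r' y : 0 < r -> r <= r' ->
  euclid_norm (fun i => c i - p i) <= r' + r ->
  euclid_norm (fun i => y i - shrink_center p c r i) <= r ->
  euclid_norm (fun i => y i - c i) <= r'.
Proof.
move=> r_gt0 le_rr' near_cp near_y.
apply: le_trans (euclid_dist_triangle y (shrink_center p c r) c) _.
set D := euclid_norm (fun i => c i - p i) in near_cp *.
rewrite (@eq_euclid_norm _ _ (fun i => shrink_center p c r i - c i)
  (fun i => shrink_coef p c r * (p i - c i))) => [|i]; last by rewrite /shrink_center; ring.
rewrite euclid_normZ (euclid_distC p c) -/D /shrink_coef -/D.
case: ifP => [_|/negbT]; first by rewrite normr0 mul0r; lra.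
rewrite -ltNge => far; have D_gt0 : 0 < D by lra.
by rewrite ger0_norm ?divfK ?divr_ge0 ?gt_eqF //; lra.
Qed.

End ShrinkBall.

Lemma sqnorm_perturb_le (R : realType) d (x e : 'I_d -> R) (A : R) :
  (forall j, `|e j| <= 1) -> (forall j, x j ^+ 2 <= A ^+ 2) -> 0 <= A ->
  sqnorm (fun j => x j + e j) <= sqnorm x + d%:R * (2 * A + 1).
Proof.
move=> e_le1 x_leA A_ge0.
rewrite -[d in d%:R]card_ord mulr_natl -sumr_const -big_split /=.
apply: ler_sum => j _.
have /andP[e_ge e_le] : -1 <= e j <= 1 by rewrite -ler_norml.
have := x_leA j; rewrite expr2 => x_sqr.
have x_le : x j <= A by nra.
have x_ge : - A <= x j by nra.
nra.
Qed.

Section UnitScale.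
Variables (R : realType) (d : nat) (p : 'I_d -> R) (r : R).
Hypothesis r_gt0 : 0 < r.

Definition unit_coord (y : 'I_d -> R) : 'I_d -> R := fun j => r^-1 * (y j - p j).

Lemma unit_coord_shrink_le2 c : euclid_norm (unit_coord (shrink_center p c r)) <= 2.
Proof.
rewrite euclid_normZ gtr0_norm ?invr_gt0 // mulrC ler_pdivrMr //.
exact: shrink_center_near.
Qed.

Lemma unit_coord_shrink_ball c r' x : r <= r' ->
  euclid_norm (fun i => c i - p i) <= r' + r ->
  euclid_norm (fun j => x j - unit_coord (shrink_center p c r) j) <= 1 ->
  closed_ball c r' (fun j => p j + r * x j).
Proof.
move=> le_rr' near_cp near_x; apply: shrink_ball_sub r_gt0 le_rr' near_cp _.
rewrite (@eq_euclid_norm _ _ _ (fun j => r * (x j - unit_coord (shrink_center p c r) j))).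
  by rewrite euclid_normZ gtr0_norm // -[leRHS]mulr1 ler_pM2l.
by move=> j; rewrite /unit_coord; field; rewrite gt_eqF.
Qed.

End UnitScale.

Lemma closed_ball_meet_dist (R : realType) d (c1 c2 z : 'I_d -> R) (r1 r2 : R) :
  closed_ball c1 r1 z -> closed_ball c2 r2 z -> euclid_norm (fun i => c2 i - c1 i) <= r2 + r1.
Proof.
rewrite /closed_ball => z1 z2; apply: le_trans (euclid_dist_triangle c2 z c1) _.
by rewrite euclid_distC lerD.
Qed.

(* Volumes are replaced by counts of integer points: a [grid] point is an
   integer vector of the cube [-C, L - C]^d, stored with coordinates shifted
   by C so that they live in 'I_L.+1. *)
Section Grid.
Variables (R : realType) (d L C : nat).

Definition grid := {ffun 'I_d -> 'I_L.+1}.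

Definition grid_coord (n : grid) : 'I_d -> R := fun j => (n j)%:R - C%:R.

Definition grid_ball (rho : nat) : {set grid} :=
  [set n : grid | sqnorm (grid_coord n) <= rho%:R ^+ 2].

Definition grid_count (rho : nat) := #|grid_ball rho|.

Lemma grid_ball_coord (n : grid) rho : n \in grid_ball rho ->
  forall j : 'I_d, (C <= n j + rho)%N /\ (n j <= C + rho)%N.
Proof.
rewrite inE => n_in j.
have : `|grid_coord n j| <= rho%:R.
  rewrite -ler_sqr ?nnegrE ?ler0n // real_normK ?num_real //.
  exact: le_trans (sqr_le_sqnorm _ j) n_in.
rewrite ler_norml /grid_coord => /andP[lb ub].
by split; rewrite -(ler_nat R) natrD; lra.
Qed.

Lemma grid_count_le rho : (grid_count rho <= (2 * rho + 1) ^ d)%N.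
Proof.
pose h (n : grid) : {ffun 'I_d -> 'I_(2 * rho).+1} := [ffun j => inord (n j + rho - C)].
have h_inj : {in grid_ball rho &, injective h}.
  move=> n n' n_in n'_in /ffunP hnn'; apply/ffunP => j; apply/val_inj => /=.
  move: (hnn' j); rewrite !ffunE => /(congr1 val).
  have [? ?] := grid_ball_coord n_in j; have [? ?] := grid_ball_coord n'_in j.
  by rewrite /= !inordK; lia.
rewrite /grid_count -(card_in_imset h_inj).
by apply: leq_trans (max_card _) _; rewrite card_ffun !card_ord addn1.
Qed.

Lemma grid_count_ge a rho : (a <= C)%N -> (C + a <= L)%N -> (d * a ^ 2 <= rho ^ 2)%N ->
  ((2 * a + 1) ^ d <= grid_count rho)%N.
Proof.
move=> aC CaL a_rho.
pose g (f : {ffun 'I_d -> 'I_(2 * a).+1}) : grid := [ffun j => inord (f j + C - a)].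
have coord_g (f : {ffun 'I_d -> 'I_(2 * a).+1}) j :
    (f j + C - a < L.+1)%N /\ grid_coord (g f) j = (f j)%:R - a%:R.
  have fj := ltn_ord (f j).
  split; first by lia.
  by rewrite /grid_coord ffunE inordK ?natrB ?natrD; [lra|lia|lia].
have g_inj : injective g.
  move=> f f' /ffunP gff'; apply/ffunP => j; apply/val_inj => /=.
  move: (gff' j); rewrite !ffunE => /(congr1 val) /=.
  have [? _] := coord_g f j; have [? _] := coord_g f' j.
  by rewrite !inordK //; lia.
have -> : ((2 * a + 1) ^ d = #|g @: [set: {ffun 'I_d -> 'I_(2 * a).+1}]|)%N.
  by rewrite card_imset // cardsT card_ffun !card_ord addn1.
apply: subset_leq_card; apply/subsetP => _ /imsetP[f _ ->].
rewrite inE; apply: le_trans (sqnorm_le_const (A := a%:R ^+ 2) _) _.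
  move=> j; have [_ ->] := coord_g f j.
  have : (f j)%:R <= (2 * a)%:R :> R by rewrite ler_nat -ltnS.
  by rewrite natrM; have : 0 <= (f j)%:R :> R by []; nra.
by rewrite -natrX -natrM -natrX ler_nat.
Qed.

(* Grid points are grouped by their coordinates' quotients and remainders
   modulo 3: the quotient lies in the ball of radius M + d, the remainder
   in {0, 1, 2}^d. *)
Lemma div3_grid_coord (u : nat) : (C <= L)%N -> (u <= L)%N ->
  let z := ((u + 1 + 2 * C) %/ 3)%N in let s := ((u + 1 + 2 * C) %% 3)%N in
  [/\ (z <= L)%N, (s < 3)%N & 3 * (z%:R - C%:R) = (u%:R - C%:R) + (1 - s%:R) :> R].
Proof.
move=> CL uL z s; have eq_div := divn_eq (u + 1 + 2 * C) 3.
split; [by rewrite /z; lia | by rewrite /s ltn_mod |].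
have : ((u + 1 + 2 * C)%N)%:R = ((z * 3 + s)%N)%:R :> R by rewrite -eq_div.
by rewrite !natrD !natrM; lra.
Qed.

Lemma grid_count_mul3 M : (C <= L)%N ->
  (grid_count (3 * M) <= 3 ^ d * grid_count (M + d))%N.
Proof.
move=> CL.
pose quo (n : grid) : grid := [ffun j => inord ((n j + 1 + 2 * C) %/ 3)].
pose rem (n : grid) : {ffun 'I_d -> 'I_3} := [ffun j => inord ((n j + 1 + 2 * C) %% 3)].
have qr (n : grid) j := div3_grid_coord CL (ltnSE (ltn_ord (n j))).
have qr_inj : injective (fun n => (quo n, rem n)).
  move=> n n' [/ffunP qnn' /ffunP rnn']; apply/ffunP => j; apply/val_inj => /=.
  move: (qnn' j) (rnn' j); rewrite !ffunE => /(congr1 val) + /(congr1 val).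
  have [? ? _] := qr n j; have [? ? _] := qr n' j.
  rewrite /= !inordK // => eq_q eq_r.
  have := divn_eq (n j + 1 + 2 * C) 3; have := divn_eq (n' j + 1 + 2 * C) 3.
  by rewrite eq_q eq_r; lia.
rewrite /grid_count -(card_imset (grid_ball (3 * M)) qr_inj).
apply: (@leq_trans #|setX (grid_ball (M + d)) [set: {ffun 'I_d -> 'I_3}]|); last first.
  by rewrite cardsX cardsT card_ffun !card_ord mulnC.
apply: subset_leq_card; apply/subsetP => _ /imsetP[n n_in ->].
rewrite inE in_setT andbT inE.
have n_le : sqnorm (grid_coord n) <= ((3 * M)%N)%:R ^+ 2 by move: n_in; rewrite inE.
pose err j : R := 1 - ((n j + 1 + 2 * C) %% 3)%N%:R.
have quoE j : 3 * grid_coord (quo n) j = grid_coord n j + err j.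
  by have [? _ eq3] := qr n j; rewrite /grid_coord ffunE inordK.
have err_le1 j : `|err j| <= 1.
  have [_ lt3 _] := qr n j; rewrite ler_norml.
  have : ((n j + 1 + 2 * C) %% 3)%N%:R <= 2 :> R by rewrite (ler_nat R _ 2); lia.
  by have := ler0n R ((n j + 1 + 2 * C) %% 3); rewrite /err; lra.
have := sqnorm_perturb_le err_le1 (fun j => le_trans (sqr_le_sqnorm _ j) n_le) (ler0n _ _).
rewrite -(eq_sqnorm quoE) sqnormZ.
have d_le_sqr : d%:R <= d%:R ^+ 2 :> R by rewrite -natrX ler_nat; nia.
have M_ge0 : 0 <= M%:R :> R by [].
have d_ge0 : 0 <= d%:R :> R by [].
by move: n_le; rewrite !natrM !natrD /=; nra.
Qed.

Definition grid_scaled (M : nat) (n : grid) : 'I_d -> R := fun j => grid_coord n j / M%:R.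

Definition grid_cover (M : nat) (q : 'I_d -> R) : {set grid} :=
  [set n : grid | euclid_norm (fun j => grid_scaled M n j - q j) <= 1].

Lemma grid_cover_sub M q : (0 < M)%N -> euclid_norm q <= 2 ->
  grid_cover M q \subset grid_ball (3 * M).
Proof.
move=> M_gt0 q_le2; apply/subsetP => n; rewrite !inE => n_near.
have Mr_gt0 : 0 < M%:R :> R by rewrite ltr0n.
have zero_shift (x : 'I_d -> R) : euclid_norm (fun i => x i - 0) = euclid_norm x.
  by apply: eq_euclid_norm => i; rewrite subr0.
have := euclid_dist_triangle (grid_scaled M n) q (fun _ => 0).
rewrite !zero_shift => /le_trans/(_ (lerD n_near q_le2)).
rewrite (_ : 1 + 2 = 3 :> R) // euclid_norm_le // => /(ler_wpM2l (sqr_ge0 M%:R)).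
rewrite -sqnormZ (@eq_sqnorm _ _ _ (grid_coord n)) => [|j]; last first.
  by rewrite /grid_scaled mulrC divfK // gt_eqF.
by rewrite natrM -exprMn mulrC.
Qed.

(* Truncation is only meaningful on nonnegative reals, hence the shift by 2 M. *)
Definition grid_round (M : nat) (t : R) : nat := Num.truncn (M%:R * t + (2 * M)%:R).

Lemma grid_round_spec M t : -2 <= t <= 2 ->
  `|(grid_round M t)%:R - (M%:R * t + (2 * M)%:R)| <= 1 /\ (grid_round M t <= 4 * M)%N.
Proof.
move=> /andP[t_ge t_le]; set u := M%:R * t + (2 * M)%:R.
have M_ge0 : 0 <= M%:R :> R by [].
have u_ge0 : 0 <= u by rewrite /u natrM; nra.
have round_le : (grid_round M t)%:R <= u by rewrite truncn_le.
have round_gt : u < (grid_round M t)%:R + 1.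
  by have := leqnn (grid_round M t); rewrite {2}/grid_round truncn_le_nat -natr1.
split; first by rewrite ler_norml; lra.
by rewrite -(ler_nat R) natrM; move: round_le; rewrite /u natrM; nra.
Qed.

Lemma grid_cover_ge M q : (0 < M)%N -> (d <= M)%N -> (3 * M <= C)%N ->
  (C + 3 * M <= L)%N -> euclid_norm q <= 2 -> (grid_count (M - d) <= #|grid_cover M q|)%N.
Proof.
move=> M_gt0 dM MC CML q_le2.
have Mr_gt0 : 0 < M%:R :> R by rewrite ltr0n.
move: q_le2; rewrite euclid_norm_le // => q_le2.
pose G j := grid_round M (q j).
have G_spec j : `|(G j)%:R - (M%:R * q j + (2 * M)%:R)| <= 1 /\ (G j <= 4 * M)%N.
  apply: grid_round_spec; rewrite -ler_norml -ler_sqr ?nnegrE // real_normK ?num_real //.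
  exact: le_trans (sqr_le_sqnorm _ j) q_le2.
pose f (m : grid) : grid := [ffun j => inord (m j + G j - 2 * M)].
have f_range m (j : 'I_d) : m \in grid_ball (M - d) ->
    (2 * M <= m j + G j)%N /\ (m j + G j - 2 * M <= L)%N.
  move=> m_in; have [_ ?] := G_spec j.
  by move: (grid_ball_coord m_in j); move: (nat_of_ord (m j)) => u; lia.
have f_inj : {in grid_ball (M - d) &, injective f}.
  move=> m m' m_in m'_in /ffunP fmm'; apply/ffunP => j; apply/val_inj => /=.
  move: (f_range m j m_in) (f_range m' j m'_in) (fmm' j); rewrite !ffunE.
  move: (nat_of_ord (m j)) (nat_of_ord (m' j)) => u u' [? ?] [? ?] /(congr1 val) /=.
  by rewrite !inordK ?ltnS //; lia.
rewrite /grid_count -(card_in_imset f_inj).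
apply: subset_leq_card; apply/subsetP => _ /imsetP[m m_in ->].
rewrite inE euclid_norm_le // expr1n.
pose err j : R := (G j)%:R - (M%:R * q j + (2 * M)%N%:R).
have f_scaled j : grid_scaled M (f m) j - q j = M%:R^-1 * (grid_coord m j + err j).
  have [? ?] := f_range m j m_in.
  rewrite /grid_scaled /grid_coord /f ffunE inordK ?ltnS //.
  by rewrite natrB // natrD /err; field; lra.
rewrite (eq_sqnorm f_scaled) sqnormZ.
have m_le : sqnorm (grid_coord m) <= ((M - d)%N)%:R ^+ 2 by move: m_in; rewrite inE.
have := @sqnorm_perturb_le _ _ _ err _ _ (fun j => le_trans (sqr_le_sqnorm _ j) m_le) (ler0n _ _).
have err_le1 j : `|err j| <= 1 by have [] := G_spec j.
move=> /(_ err_le1); move: m_le; rewrite natrB //.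
have d_le_sqr : d%:R <= d%:R ^+ 2 :> R by rewrite -natrX ler_nat; nia.
have dM_r : d%:R <= M%:R :> R by rewrite ler_nat.
have := sqnorm_ge0 (fun j => grid_coord m j + err j).
move=> ? ? ?; rewrite exprVn mulrC ler_pdivrMr ?exprn_gt0 // mul1r.
nra.
Qed.

End Grid.

Lemma card_sub_as_sum (T : finType) (A B : {set T}) :
  A \subset B -> #|A| = (\sum_(t in B) (t \in A))%N.
Proof.
move=> /subsetP AB; rewrite -sum1_card big_mkcond [RHS]big_mkcond /=.
apply: eq_bigr => t _; case: (boolP (t \in A)) => [/AB -> //|_].
by case: (t \in B).
Qed.

Lemma sum_card_le_mul (I T : finType) (W : {set I}) (B : {set T})
    (S : I -> {set T}) (K : nat) :
  (forall i, i \in W -> S i \subset B) ->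
  (forall t, #|[set i in W | t \in S i]| <= K)%N ->
  (\sum_(i in W) #|S i| <= K * #|B|)%N.
Proof.
move=> SB mult_le.
rewrite (eq_bigr (fun i => \sum_(t in B) (t \in S i))%N) => [|i /SB/card_sub_as_sum //].
rewrite exchange_big /= mulnC -sum_nat_const leq_sum // => t _.
apply: leq_trans (mult_le t).
rewrite (@card_sub_as_sum _ _ W); last by apply/subsetP => i; rewrite inE => /andP[].
by apply/eq_leq/eq_bigr => i iW; rewrite inE iW.
Qed.

Local Close Scope ring_scope.

Lemma bernoulli_leq (K s : nat) : K ^ s * (K + s) <= K * (K + 1) ^ s.
Proof.
elim: s => [|s IH]; first by rewrite !expn0 mul1n muln1 addn0.
have step : K ^ s * (K + s) * (K + 1) <= K * (K + 1) ^ s * (K + 1) by rewrite leq_mul2r IH orbT.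
rewrite !expnS; apply: leq_trans (leq_trans _ step) _.
  by set X := K ^ s; nia.
by rewrite mulnA [_ * (K + 1)]mulnC -!mulnA mulnCA.
Qed.

Lemma exists_slow_step (f : nat -> nat) (K a : nat) : 0 < K ->
  K * f a < (K + a) * f 0 -> exists2 k, k < a & K * f k.+1 < (K + 1) * f k.
Proof.
move=> K_gt0 small.
case: (boolP [exists k : 'I_a, K * f k.+1 < (K + 1) * f k]) => [/existsP[k slow]|/existsPn fast].
  by exists k.
have fast_step k : k < a -> (K + 1) * f k <= K * f k.+1.
  by move=> lt_ka; move: (fast (Ordinal lt_ka)); rewrite -leqNgt.
have fast_growth k : k <= a -> (K + 1) ^ k * f 0 <= K ^ k * f k.
  elim: k => [|k IH] le_ka; first by rewrite !expn0.
  rewrite !expnS -!mulnA; apply: leq_trans (_ : (K + 1) * (K ^ k * f k) <= _).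
    by rewrite leq_mul2l IH ?orbT // ltnW.
  by rewrite mulnCA [K * (_ * _)]mulnCA leq_mul2l fast_step ?orbT.
have := fast_growth a (leqnn a); have := bernoulli_leq K a.
have : 0 < K ^ a by rewrite expn_gt0 K_gt0.
set P := (K + 1) ^ a; set Q := K ^ a; nia.
Qed.

Local Open Scope ring_scope.

(* A volume argument on a grid of mesh 1 / M: the grid balls of radius 1
   around the q i have about grid_count M points each, and all lie in the
   grid ball of radius 3 M, which has about 3 ^ d grid_count M points and
   is covered at most K times.  A scale M where the error terms are
   negligible is provided by [exists_slow_step]. *)
Lemma unit_ball_packing (R : realType) (d : nat) (I : finType) (W : {set I})
    (q : I -> 'I_d -> R) (K : nat) :
  (0 < d)%N -> (0 < K)%N ->
  (forall i, i \in W -> euclid_norm (q i) <= 2) ->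
  (forall x : 'I_d -> R,
     #|[set i in W | (euclid_norm (fun j => x j - q i j) <= 1)%R]| <= K)%N ->
  (#|W| <= K * 3 ^ d)%N.
Proof.
move=> d_gt0 K_gt0 q_le2 mult_le; rewrite leqNgt; apply/negP => W_big.
set K' := (K * 3 ^ d)%N; set a := (K' * (4 * d) ^ d + 1)%N.
set C := (3 * (3 * d * a + d) + a)%N; set L := (2 * C)%N.
pose f k := grid_count R d L C (d * a + 2 * d * k).
have K'_gt0 : (0 < K')%N by rewrite muln_gt0 K_gt0 expn_gt0.
have [k lt_ka slow] : exists2 k, (k < a)%N & (K' * f k.+1 < (K' + 1) * f k)%N.
  apply: exists_slow_step => //.
  have f0_ge : ((2 * a + 1) ^ d <= f 0)%N.
    by apply: grid_count_ge; rewrite /C /L; nia.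
  have fa_le : (f a <= (4 * d) ^ d * (2 * a + 1) ^ d)%N.
    by rewrite -expnMn; apply: leq_trans (grid_count_le _ _ _ _ _) _; rewrite leq_exp2r //; nia.
  have : (0 < (2 * a + 1) ^ d)%N by rewrite expn_gt0 addn1.
  move: f0_ge fa_le; rewrite /a; set X := ((2 * _ + 1) ^ d)%N; set Y := ((4 * d) ^ d)%N; nia.
set M := (d * a + d + 2 * d * k)%N.
have M_gt0 : (0 < M)%N by rewrite /M; nia.
have [fkE fSkE] : f k = grid_count R d L C (M - d) /\ f k.+1 = grid_count R d L C (M + d).
  by split; congr grid_count; rewrite /M; lia.
have cover_le : (\sum_(i in W) #|grid_cover L C M (q i)| <= K * grid_count R d L C (3 * M))%N.
  apply: sum_card_le_mul => [i /q_le2|n]; first exact: grid_cover_sub.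
  apply: leq_trans (mult_le (grid_scaled R C M n)).
  by apply: subset_leq_card; apply/subsetP => i; rewrite !inE => /andP[-> ->].
have cover_ge : (#|W| * f k <= \sum_(i in W) #|grid_cover L C M (q i)|)%N.
  rewrite fkE -sum_nat_const; apply: leq_sum => i /q_le2 q_i_le2.
  by apply: grid_cover_ge; rewrite /M /C /L; nia.
have mul3 := @grid_count_mul3 R d L C M (leq_pmull C (isT : (0 < 2)%N)).
move: slow cover_le cover_ge mul3 W_big; rewrite fSkE /K'.
set A := f k; set B := grid_count _ _ _ _ (M + d); set T := grid_count _ _ _ _ (3 * M).
set S := (\sum_(i in W) _)%N; set Z := (3 ^ d)%N; nia.
Qed.

Local Close Scope ring_scope.

Lemma exists_subset_card (T : finType) (S : {set T}) n :
  n <= #|S| -> exists2 A : {set T}, A \subset S & #|A| = n.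
Proof.
elim: n => [|n IH] le_nS; first by exists set0; rewrite ?sub0set ?cards0.
have [A AS cardA] := IH (ltnW le_nS).
have : 0 < #|S :\: A| by rewrite cardsD (setIidPr AS) cardA subn_gt0.
case/card_gt0P => x; rewrite inE => /andP[xA xS].
by exists (x |: A); rewrite ?subUset ?sub1set ?xS ?AS // cardsU1 xA cardA.
Qed.

Lemma leq_biclique_number (V : finType) (e : rel V) t :
  has_biclique e t -> t <= biclique_number e.
Proof.
move=> bic; have /existsP[A /existsP[B /and4P[_ /eqP cardA _ _]]] := bic.
have lt_t : t < #|V|.+1 by rewrite ltnS -cardA max_card.
exact: (@leq_bigmax_cond _ (fun t : 'I_#|V|.+1 => has_biclique e t) val (Ordinal lt_t)).
Qed.

Lemma clique_card_le (V : finType) (e : rel V) (X : {set V}) :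
  {in X &, forall a b, a != b -> e a b} -> #|X| <= 2 * biclique_number e + 1.
Proof.
move=> clique; rewrite leqNgt; apply/negP => X_big.
set t := biclique_number e.
have [A AX cardA] := @exists_subset_card _ X t.+1 (ltac:(lia)).
have [B BXA cardB] := @exists_subset_card _ (X :\: A) t.+1
  (ltac:(rewrite cardsD (setIidPr AX) cardA; lia)).
suff /leq_biclique_number : has_biclique e t.+1 by rewrite ltnn.
apply/existsP; exists A; apply/existsP; exists B.
rewrite cardA cardB !eqxx /=; apply/andP; split.
  rewrite disjoint_sym disjoint_subset; apply: subset_trans BXA _.
  by apply/subsetP => x; rewrite !inE => /andP[].
apply/forall_inP => a aA; apply/forall_inP => b bB.
move/subsetP: BXA => /(_ b bB); rewrite inE => /andP[bA bX].
by apply: clique => //; [exact: (subsetP AX) | apply: contraNneq bA => <-].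
Qed.

Local Open Scope ring_scope.

Theorem mainTheorem11 (R : realType) (d : nat) (V : finType) (e : rel V)
  (c : V -> 'I_d -> R) (rad : V -> R) :
  (0 < d)%N ->
  (0 < #|V|)%N ->
  simple_graph e ->
  (forall v, (0 < rad v)%R) ->
  (forall u v, u != v ->
     ~ (forall x, closed_ball (c u) (rad u) x <-> closed_ball (c v) (rad v) x)) ->
  (forall u v, u != v ->
     (e u v <-> exists x, closed_ball (c u) (rad u) x /\ closed_ball (c v) (rad v) x)) ->
  exists v : V, (degree e v <= (2 * biclique_number e + 1) * 3 ^ d)%N.
Proof.
(* The balls need not be distinct. *)
move=> d_gt0 /card_gt0P[v1 _] [_ e_irr] rad_gt0 _ edgeE.
have [v0 _ v0_min] := @arg_minP _ _ _ v1 predT rad isT.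
exists v0; set r := rad v0; set p := c v0.
have near_p w : e v0 w -> euclid_norm (fun i => c w i - p i) <= rad w + r.
  move=> v0w; have v0_neq_w : v0 != w by apply: contraTneq v0w => <-; rewrite e_irr.
  by have [z [z0 zw]] := (edgeE v0 w v0_neq_w).1 v0w; exact: closed_ball_meet_dist z0 zw.
apply: (@unit_ball_packing R d V _ (fun w => unit_coord p r (shrink_center p (c w) r))) => //;
  first by rewrite addn1.
- by move=> w _; exact: (unit_coord_shrink_le2 p (rad_gt0 v0)).
- move=> x; apply: clique_card_le => a b; rewrite !inE => /andP[v0a a_near] /andP[v0b b_near] ab.
  apply/(edgeE a b ab).2; exists (fun j => p j + r * x j).
  by split; [move: a_near | move: b_near];
    apply: (unit_coord_shrink_ball (rad_gt0 v0) (v0_min _ isT) (near_p _ _)).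
Qed.
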